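(* Let $\mathcal{X}\subset\mathbb{R}^d$ be compact with diameter $|\mathcal{X}|=\max_{x,x'\in\mathcal{X}}\|x-x'\|$, and let $\epsilon>0$, $\delta\in(0,1)$. Let $\{(x_i,y_i)\}_{i=1}^M\subset\mathcal{X}\times\mathbb{R}$ be a training set and $\sigma_y^2=\frac1M\sum_{i=1}^M y_i^2$. Let $f$ be the quantum (VQC) model with $L$ Pauli encoding gates on each of the $d$ input dimensions, with full freedom on its Fourier coefficients, trained by ridge regression with regularization $\lambda>0$. Let $\tilde f$ be the Random Fourier Features model with $D$ frequencies obtained by distinct sampling, trained on the same dataset with the same regularization $\lambda$. Then $|f(x)-\tilde f(x)|\le\epsilon$ holds with probability at least $1-\delta$ for a number of samples $$D=\Omega\!\left(\frac{d\,C_1(1+\lambda)^2}{\lambda^4\epsilon^2}\left[\log(dL^2|\mathcal{X}|)+\log\frac{C_2(1+\lambda)}{\epsilon\lambda^2}-\log\delta\right]\right),$$ where $C_1,C_2$ are constants depending only on $\sigma_y$ and $|\mathcal{X}|$, and $\Omega(\cdot)$ denotes the asymptotic ''Big-Omega'' lower-bound notation.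
   Context: Pauli encoding: each of the $L$ encoding gates per input coordinate $x_k$ has the form $e^{-i x_k \sigma/2}$ with $\sigma$ a Pauli matrix, so the frequency spectrum of the model is $\Omega=\{-L,\dots,L\}^d\subset\mathbb{Z}^d$. A VQC model ''with full freedom on the Fourier coefficients'' is any function $f(x)=\sum_{\omega\in\Omega}a_\omega\cos(\omega^Tx)+b_\omega\sin(\omega^Tx)$ with arbitrary real coefficients, i.e. a linear model $\mathbf{w}^T\phi(x)$ with feature vector $\phi(x)=\frac{1}{\sqrt{|\Omega|}}(\cos(\omega^Tx),\sin(\omega^Tx))_{\omega\in\Omega}$; equivalently a kernel ridge regression with the shift-invariant kernel $k(x,x')=\frac1{|\Omega|}\sum_{\omega\in\Omega}\cos(\omega^T(x-x'))$. Training with regularization $\lambda$ means minimizing $\frac1M\sum_i|\mathbf{w}^T\phi(x_i)-y_i|^2+\lambda\|\mathbf{w}\|^2$. Distinct sampling RFF model: sample $D$ frequencies $\omega_1,\dots,\omega_D$ i.i.d. uniformly from $\Omega$, set $\tilde\phi(x)=\frac1{\sqrt D}(\cos(\omega_j^Tx),\sin(\omega_j^Tx))_{j=1}^D$, and let $\tilde f(x)=\tilde{\mathbf{w}}^T\tilde\phi(x)$ where $\tilde{\mathbf{w}}$ solves the same ridge regression problem with $\tilde\phi$ in place of $\phi$. *)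

From HB Require Import structures.
From mathcomp Require Import all_boot all_order all_algebra.
From mathcomp Require Import all_classical all_reals all_analysis.
Set Implicit Arguments. Unset Strict Implicit. Unset Printing Implicit Defensive.
Import Order.TTheory GRing.Theory Num.Theory.
Import numFieldNormedType.Exports.
Local Open Scope classical_set_scope.
Local Open Scope ring_scope.

Section VQC.
Variable R : realType.

Definition eucl_dist (d : nat) (x x' : 'rV[R]_d) : R :=
  Num.sqrt (\sum_(k < d) (x 0 k - x' 0 k) ^+ 2).

Definition diam (d : nat) (X : set 'rV[R]_d) : R :=
  sup [set eucl_dist x x' | x in X & x' in X].

(* Frequency spectrum Omega = {-L,...,L}^d : the component k of om is
   (om k : nat) - L. *)
Definition Omega (d L : nat) := {ffun 'I_d -> 'I_(2 * L + 1)}.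

Definition freq_coord (d L : nat) (om : Omega d L) (k : 'I_d) : R :=
  ((om k : nat)%:R - L%:R).

Definition freq_dot (d L : nat) (om : Omega d L) (x : 'rV[R]_d) : R :=
  \sum_(k < d) freq_coord om k * x 0 k.

Definition trig (b : bool) (t : R) : R := if b then cos t else sin t.

Definition phi_full (d L : nat) (x : 'rV[R]_d) (j : Omega d L * bool) : R :=
  (Num.sqrt #|{: Omega d L}|%:R)^-1 * trig j.2 (freq_dot j.1 x).

Definition phi_rff (d L D : nat) (s : {ffun 'I_D -> Omega d L})
  (x : 'rV[R]_d) (j : 'I_D * bool) : R :=
  (Num.sqrt D%:R)^-1 * trig j.2 (freq_dot (s j.1) x).

Definition linmodel (I : finType) (w : I -> R) (feat : I -> R) : R :=
  \sum_(j : I) w j * feat j.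

Definition ridge_obj (I : finType) (d M : nat) (phi : 'rV[R]_d -> I -> R)
  (xs : 'I_M -> 'rV[R]_d) (ys : 'I_M -> R) (lam : R) (w : I -> R) : R :=
  M%:R^-1 * \sum_(i < M) (linmodel w (phi (xs i)) - ys i) ^+ 2
  + lam * \sum_(j : I) w j ^+ 2.

Definition ridge_solution (I : finType) (d M : nat) (phi : 'rV[R]_d -> I -> R)
  (xs : 'I_M -> 'rV[R]_d) (ys : 'I_M -> R) (lam : R) (w : I -> R) : Prop :=
  forall w' : I -> R, ridge_obj phi xs ys lam w <= ridge_obj phi xs ys lam w'.

Definition sigma_y (M : nat) (ys : 'I_M -> R) : R :=
  Num.sqrt (M%:R^-1 * \sum_(i < M) ys i ^+ 2).

(* Probability of an event over D i.i.d. uniform draws from Omega,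
   i.e. the uniform probability on Omega^D. *)
Definition prob_sample (d L D : nat) (E : {ffun 'I_D -> Omega d L} -> Prop) : R :=
  #|[set s : {ffun 'I_D -> Omega d L} | `[< E s >]]|%:R
  / #|{: {ffun 'I_D -> Omega d L}}|%:R.

Definition close_event (d L M D : nat) (X : set 'rV[R]_d)
  (xs : 'I_M -> 'rV[R]_d) (ys : 'I_M -> R) (lam eps : R)
  (s : {ffun 'I_D -> Omega d L}) : Prop :=
  forall (w : Omega d L * bool -> R) (wt : 'I_D * bool -> R),
    ridge_solution (@phi_full d L) xs ys lam w ->
    ridge_solution (phi_rff s) xs ys lam wt ->
    forall x, X x ->
      `| linmodel w (phi_full x) - linmodel wt (phi_rff s x) | <= eps.

End VQC.

(** Both trained models are kernel ridge regressors: by the representer theorem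
    a prediction is [\sum_i a_i k(x_i, x)] with [(M lam + K) a = y], where the
    kernel [k(x, x') = avg cos(om^T (x - x'))] averages over the whole spectrum
    Omega for the VQC model and over the D sampled frequencies for the RFF model.
    Positive semidefiniteness of the Gram matrices gives [lam |a|_1 <= sigma_y],
    and comparing the two dual systems bounds [|f x - f~ x|] by
    [s sigma_y (1 + lam) / lam^2] when the two kernels differ by at most [s].
    The kernel error is [2 d L]-Lipschitz for the sup norm of [x - x'] and
    vanishes at [0], so it is at most [s] on [X - X] as soon as it is at most
    [s / 2] on a grid of mesh [s / (4 d L)]; Hoeffding's inequality (proved by
    counting over Omega^D) and a union bound over the [(2N + 1)^d] grid points
    bound the failure probability by [delta] for the stated number of samples. *)

From HB Require Import structures.
From mathcomp Require Import all_boot all_order all_algebra.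
From mathcomp Require Import all_classical all_reals all_analysis.
From mathcomp Require Import ring lra.
Set Implicit Arguments. Unset Strict Implicit. Unset Printing Implicit Defensive.
Import Order.TTheory GRing.Theory Num.Theory.
Import numFieldNormedType.Exports.
Local Open Scope ring_scope.

Section RidgeRegression.
Variable R : realType.

Lemma sqr_sum_norm_le (M : nat) (v : 'I_M -> R) :
  (\sum_i `|v i|) ^+ 2 <= M%:R * \sum_i v i ^+ 2.
Proof.
have [M0|M0] := posnP M; first by subst M; rewrite !big_ord0 mul0r expr0n.
have Mpos : 0 < M%:R :> R by rewrite ltr0n.
set S := \sum_i `|v i|; set m := S / M%:R.
have : 0 <= \sum_i (`|v i| - m) ^+ 2 by apply: sumr_ge0 => i _; exact: sqr_ge0.
have -> : \sum_i (`|v i| - m) ^+ 2 = \sum_i v i ^+ 2 - S ^+ 2 / M%:R.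
  transitivity (\sum_i v i ^+ 2 - m *+ 2 * S + M%:R * m ^+ 2).
    have -> : M%:R * m ^+ 2 = \sum_(i < M) m ^+ 2 by rewrite sumr_const card_ord mulr_natl.
    rewrite /S mulr_sumr -sumrB -big_split /=.
    by apply: eq_bigr => i _; rewrite sqrrB real_normK ?num_real //; ring.
  by rewrite /m; field; rewrite gt_eqF.
by rewrite subr_ge0 ler_pdivrMr // mulrC.
Qed.

Lemma quadratic_ge0_linear_coef0 (A B : R) : 0 <= B ->
  (forall t, 0 <= t ^+ 2 * B - t *+ 2 * A) -> A = 0.
Proof.
move=> B0 H; have B1 : 0 < B + 1 by rewrite ltr_wpDl.
have := H (A / (B + 1)).
have -> : (A / (B + 1)) ^+ 2 * B - (A / (B + 1)) *+ 2 * A =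
    - (A ^+ 2 * (B + 2)) / (B + 1) ^+ 2 by field; rewrite gt_eqF.
rewrite pmulr_lge0 ?invr_gt0 ?exprn_gt0 // oppr_ge0 => h.
have : A ^+ 2 * (B + 2) == 0 by rewrite eq_le h mulr_ge0 ?sqr_ge0 //; lra.
by rewrite mulf_eq0 sqrf_eq0 => /orP [/eqP //|]; lra.
Qed.

Lemma ridge_solution_stationary (I : finType) (d M : nat) (phi : 'rV[R]_d -> I -> R)
  (xs : 'I_M -> 'rV[R]_d) (ys : 'I_M -> R) (lam : R) (w : I -> R) :
  0 <= lam -> ridge_solution phi xs ys lam w ->
  forall j, lam * w j = M%:R^-1 * \sum_i (ys i - linmodel w (phi (xs i))) * phi (xs i) j.
Proof.
move=> lam0 Hw j.
pose e t k := w k + (if k == j then t else 0).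
have lin_e t x : linmodel (e t) (phi x) = linmodel w (phi x) + t * phi x j.
  rewrite /linmodel /e; under eq_bigr do rewrite mulrDl.
  rewrite big_split /=; congr (_ + _).
  by rewrite (bigD1 j) //= eqxx big1 ?addr0 // => k /negbTE ->; rewrite mul0r.
set B := M%:R^-1 * \sum_i phi (xs i) j ^+ 2 + lam.
set A := M%:R^-1 * \sum_i (ys i - linmodel w (phi (xs i))) * phi (xs i) j - lam * w j.
have obj_e t : ridge_obj phi xs ys lam (e t) =
    ridge_obj phi xs ys lam w + (t ^+ 2 * B - t *+ 2 * A).
  rewrite /ridge_obj; under eq_bigr do rewrite lin_e.
  have -> : \sum_(i < M) (linmodel w (phi (xs i)) + t * phi (xs i) j - ys i) ^+ 2 =
      \sum_(i < M) (linmodel w (phi (xs i)) - ys i) ^+ 2 +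
      (t ^+ 2 * \sum_i phi (xs i) j ^+ 2 - t *+ 2 *
         \sum_i (ys i - linmodel w (phi (xs i))) * phi (xs i) j).
    by rewrite !mulr_sumr -sumrB -big_split /=; apply: eq_bigr => i _; ring.
  have -> : \sum_k e t k ^+ 2 = \sum_k w k ^+ 2 + (t *+ 2 * w j + t ^+ 2).
    have -> : \sum_k e t k ^+ 2 = \sum_k w k ^+ 2 +
        \sum_k (if k == j then t else 0) * (w k *+ 2 + (if k == j then t else 0)).
      by rewrite -big_split /=; apply: eq_bigr => k _; rewrite /e /=; ring.
    congr (_ + _); rewrite (bigD1 j) //= eqxx big1 ?addr0; first by ring.
    by move=> k /negbTE ->; rewrite mul0r.
  by rewrite /B /A; ring.
have /eqP : A = 0.
  apply: (quadratic_ge0_linear_coef0 (B := B)).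
    by rewrite addr_ge0 // mulr_ge0 ?invr_ge0 ?ler0n // sumr_ge0 // => i _; exact: sqr_ge0.
  by move=> t; have := Hw (e t); rewrite obj_e; lra.
by rewrite subr_eq0 => /eqP ->.
Qed.

Definition kern (I : finType) (d : nat) (phi : 'rV[R]_d -> I -> R) (a b : 'rV[R]_d) : R :=
  \sum_j phi a j * phi b j.

Definition psd_gram (M : nat) (K : 'I_M -> 'I_M -> R) : Prop :=
  forall g : 'I_M -> R, 0 <= \sum_i \sum_l g i * g l * K l i.

Lemma kern_psd_gram (I : finType) (d M : nat) (phi : 'rV[R]_d -> I -> R)
  (xs : 'I_M -> 'rV[R]_d) : psd_gram (fun l i => kern phi (xs l) (xs i)).
Proof.
move=> g; have -> : \sum_i \sum_l g i * g l * kern phi (xs l) (xs i) =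
    \sum_j (\sum_i g i * phi (xs i) j) ^+ 2.
  transitivity (\sum_i \sum_l \sum_j g i * phi (xs i) j * (g l * phi (xs l) j)).
    apply: eq_bigr => i _; apply: eq_bigr => l _.
    by rewrite /kern mulr_sumr; apply: eq_bigr => j _; ring.
  under eq_bigr do rewrite exchange_big /=.
  rewrite exchange_big /=; apply: eq_bigr => j _.
  by rewrite expr2 mulr_suml; apply: eq_bigr => i _; rewrite mulr_sumr.
by apply: sumr_ge0 => j _; exact: sqr_ge0.
Qed.

Lemma ridge_solution_dual (I : finType) (d M : nat) (phi : 'rV[R]_d -> I -> R)
  (xs : 'I_M -> 'rV[R]_d) (ys : 'I_M -> R) (lam : R) (w : I -> R) :
  (0 < M)%N -> 0 < lam -> ridge_solution phi xs ys lam w ->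
  exists a : 'I_M -> R,
    (forall x, linmodel w (phi x) = \sum_i a i * kern phi (xs i) x) /\
    (forall i, M%:R * lam * a i + \sum_l a l * kern phi (xs l) (xs i) = ys i).
Proof.
move=> M0 lam0 Hw.
have Mpos : 0 < M%:R :> R by rewrite ltr0n.
pose a i := (ys i - linmodel w (phi (xs i))) / (M%:R * lam).
have w_a j : w j = \sum_i a i * phi (xs i) j.
  have /(congr1 (fun z => z / lam)) := ridge_solution_stationary (ltW lam0) Hw j.
  rewrite mulrC mulKf ?gt_eqF // => ->.
  rewrite mulr_sumr mulr_suml; apply: eq_bigr => i _.
  by rewrite /a; field; rewrite !gt_eqF.
have pred_a x : linmodel w (phi x) = \sum_i a i * kern phi (xs i) x.
  rewrite /linmodel; under eq_bigr do rewrite w_a mulr_suml.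
  rewrite exchange_big /=; apply: eq_bigr => i _.
  by rewrite /kern mulr_sumr; apply: eq_bigr => j _; ring.
exists a; split=> // i.
by rewrite -pred_a /a; field; rewrite !gt_eqF.
Qed.

Lemma psd_gram_dual_ge (M : nat) (K : 'I_M -> 'I_M -> R) (c : R) (g : 'I_M -> R) :
  psd_gram K -> c * \sum_i g i ^+ 2 <= \sum_i g i * (c * g i + \sum_l g l * K l i).
Proof.
move=> psdK; have -> : \sum_i g i * (c * g i + \sum_l g l * K l i) =
    c * \sum_i g i ^+ 2 + \sum_i \sum_l g i * g l * K l i.
  rewrite mulr_sumr -big_split /=; apply: eq_bigr => i _.
  rewrite mulrDr mulr_sumr; congr (_ + _); first by rewrite expr2; ring.
  by apply: eq_bigr => l _; ring.
by rewrite lerDl.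
Qed.

Lemma dual_coef_sqr_le (M : nat) (K : 'I_M -> 'I_M -> R) (c : R) (a y : 'I_M -> R) :
  0 < c -> psd_gram K -> (forall i, c * a i + \sum_l a l * K l i = y i) ->
  c ^+ 2 * \sum_i a i ^+ 2 <= \sum_i y i ^+ 2.
Proof.
move=> c0 psdK Ha.
have cross_ge : c * \sum_i a i ^+ 2 <= \sum_i a i * y i.
  have -> : \sum_i a i * y i = \sum_i a i * (c * a i + \sum_l a l * K l i).
    by apply: eq_bigr => i _; rewrite Ha.
  exact: psd_gram_dual_ge.
have cross_le : c *+ 2 * \sum_i a i * y i <= c ^+ 2 * \sum_i a i ^+ 2 + \sum_i y i ^+ 2.
  rewrite !mulr_sumr -big_split /=; apply: ler_sum => i _.
  rewrite -subr_ge0 (_ : _ - _ = (c * a i - y i) ^+ 2); first exact: sqr_ge0.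
  by rewrite sqrrB; ring.
have : 0 <= \sum_i a i ^+ 2 by apply: sumr_ge0 => i _; exact: sqr_ge0.
rewrite -mulr_natr in cross_le; nra.
Qed.

Lemma dual_coef_l1_le (M : nat) (K : 'I_M -> 'I_M -> R) (lam : R) (a y : 'I_M -> R) :
  (0 < M)%N -> 0 < lam -> psd_gram K ->
  (forall i, M%:R * lam * a i + \sum_l a l * K l i = y i) ->
  lam * \sum_i `|a i| <= Num.sqrt (M%:R^-1 * \sum_i y i ^+ 2).
Proof.
move=> M0 lam0 psdK Ha.
have Mpos : 0 < M%:R :> R by rewrite ltr0n.
have a_sqr := dual_coef_sqr_le (mulr_gt0 Mpos lam0) psdK Ha.
have a_l1 := sqr_sum_norm_le a.
have y0 : 0 <= M%:R^-1 * \sum_i y i ^+ 2.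
  by rewrite mulr_ge0 ?invr_ge0 ?ler0n // sumr_ge0 // => i _; exact: sqr_ge0.
have lamA0 : 0 <= lam * \sum_i `|a i| by rewrite mulr_ge0 ?sumr_ge0 ?ltW.
rewrite -ler_sqr ?nnegrE ?sqrtr_ge0 // sqr_sqrtr // exprMn.
apply: (le_trans (ler_wpM2l (sqr_ge0 lam) a_l1)).
have -> : lam ^+ 2 * (M%:R * \sum_i a i ^+ 2) =
    M%:R^-1 * ((M%:R * lam) ^+ 2 * \sum_i a i ^+ 2) by field; rewrite gt_eqF.
by rewrite ler_wpM2l ?invr_ge0 ?ler0n.
Qed.

Lemma dual_coef_diff_l1_le (M : nat) (K1 K2 : 'I_M -> 'I_M -> R) (lam s : R)
  (a b y : 'I_M -> R) :
  0 < lam -> 0 <= s -> psd_gram K2 ->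
  (forall i, M%:R * lam * a i + \sum_l a l * K1 l i = y i) ->
  (forall i, M%:R * lam * b i + \sum_l b l * K2 l i = y i) ->
  (forall i l, `|K1 l i - K2 l i| <= s) ->
  lam * \sum_i `|a i - b i| <= s * \sum_i `|a i|.
Proof.
move=> lam0 s0 psdK2 Ha Hb HK.
set c := M%:R * lam; pose g i := a i - b i.
set G1 := \sum_i `|a i - b i|; set A1 := \sum_i `|a i|.
have G10 : 0 <= G1 by exact: sumr_ge0.
have g_eq i : c * g i + \sum_l g l * K2 l i = \sum_l a l * (K2 l i - K1 l i).
  have -> : \sum_l g l * K2 l i = \sum_l a l * K2 l i - \sum_l b l * K2 l i.
    by rewrite -sumrB; apply: eq_bigr => l _; rewrite /g; ring.
  have -> : \sum_l a l * (K2 l i - K1 l i) = \sum_l a l * K2 l i - \sum_l a l * K1 l i.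
    by rewrite -sumrB; apply: eq_bigr => l _; ring.
  have := Ha i; rewrite -(Hb i) /g /c; lra.
have g_sqr : c * \sum_i g i ^+ 2 <= s * G1 * A1.
  apply: (le_trans (psd_gram_dual_ge c g psdK2)); under eq_bigr do rewrite g_eq.
  apply: (le_trans (ler_norm _)); apply: (le_trans (ler_norm_sum _ _ _)).
  rewrite (_ : s * G1 * A1 = G1 * (A1 * s)); last by ring.
  rewrite /G1 mulr_suml; apply: ler_sum => i _.
  rewrite normrM; apply: ler_wpM2l => //.
  apply: (le_trans (ler_norm_sum _ _ _)).
  rewrite /A1 mulr_suml; apply: ler_sum => l _.
  by rewrite normrM ler_wpM2l // distrC.
have g_l1 : lam * G1 ^+ 2 <= s * G1 * A1.
  apply: le_trans g_sqr; rewrite /c -mulrA [X in _ <= X]mulrCA ler_pM2l //.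
  exact: sqr_sum_norm_le.
have [->|G1_neq0] := eqVneq G1 0; first by rewrite mulr0 mulr_ge0 ?sumr_ge0.
have G1pos : 0 < G1 by rewrite lt_def G1_neq0 G10.
by rewrite -(ler_pM2r G1pos) -mulrA -expr2 mulrAC.
Qed.

Lemma dual_pred_diff_le (M : nat) (K1 K2 : 'I_M -> 'I_M -> R) (lam s : R)
  (a b y k1 k2 : 'I_M -> R) :
  (0 < M)%N -> 0 < lam -> 0 <= s -> psd_gram K1 -> psd_gram K2 ->
  (forall i, M%:R * lam * a i + \sum_l a l * K1 l i = y i) ->
  (forall i, M%:R * lam * b i + \sum_l b l * K2 l i = y i) ->
  (forall i l, `|K1 l i - K2 l i| <= s) ->
  (forall i, `|k1 i - k2 i| <= s) -> (forall i, `|k2 i| <= 1) ->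
  `|\sum_i a i * k1 i - \sum_i b i * k2 i|
    <= s * Num.sqrt (M%:R^-1 * \sum_i y i ^+ 2) * (1 + lam) / lam ^+ 2.
Proof.
move=> M0 lam0 s0 psdK1 psdK2 Ha Hb HK Hk Hk2.
have a_l1 := dual_coef_l1_le M0 lam0 psdK1 Ha.
have g_l1 := dual_coef_diff_l1_le lam0 s0 psdK2 Ha Hb HK.
set G1 := \sum_i `|a i - b i| in g_l1; set A1 := \sum_i `|a i| in a_l1 g_l1.
have pred_diff : `|\sum_i a i * k1 i - \sum_i b i * k2 i| <= G1 + s * A1.
  have -> : \sum_i a i * k1 i - \sum_i b i * k2 i =
      \sum_i (a i - b i) * k2 i + \sum_i a i * (k1 i - k2 i).
    by rewrite -sumrB -big_split /=; apply: eq_bigr => i _; ring.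
  apply: (le_trans (ler_normD _ _)); apply: lerD.
    apply: (le_trans (ler_norm_sum _ _ _)); apply: ler_sum => i _.
    by rewrite normrM ler_piMr.
  apply: (le_trans (ler_norm_sum _ _ _)); rewrite /A1 mulr_sumr; apply: ler_sum => i _.
  by rewrite normrM mulrC ler_wpM2r.
rewrite ler_pdivlMr ?exprn_gt0 //; apply: (le_trans (ler_wpM2r (sqr_ge0 lam) pred_diff)).
have := ler_wpM2l (ltW lam0) g_l1; have := ler_wpM2l s0 a_l1.
have := ler_wpM2l (mulr_ge0 s0 (ltW lam0)) a_l1.
rewrite expr2; lra.
Qed.

Lemma ridge_pred_diff_le (I1 I2 : finType) (d M : nat)
  (phi1 : 'rV[R]_d -> I1 -> R) (phi2 : 'rV[R]_d -> I2 -> R)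
  (xs : 'I_M -> 'rV[R]_d) (ys : 'I_M -> R) (lam s : R) (w1 : I1 -> R) (w2 : I2 -> R)
  (x : 'rV[R]_d) :
  (0 < M)%N -> 0 < lam -> 0 <= s ->
  ridge_solution phi1 xs ys lam w1 -> ridge_solution phi2 xs ys lam w2 ->
  (forall i l, `|kern phi1 (xs l) (xs i) - kern phi2 (xs l) (xs i)| <= s) ->
  (forall i, `|kern phi1 (xs i) x - kern phi2 (xs i) x| <= s) ->
  (forall i, `|kern phi2 (xs i) x| <= 1) ->
  `|linmodel w1 (phi1 x) - linmodel w2 (phi2 x)| <= s * sigma_y ys * (1 + lam) / lam ^+ 2.
Proof.
move=> M0 lam0 s0 Hw1 Hw2 HK Hk Hk2.
have [a [-> Ha]] := ridge_solution_dual M0 lam0 Hw1.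
have [b [-> Hb]] := ridge_solution_dual M0 lam0 Hw2.
exact: (dual_pred_diff_le M0 lam0 s0 (kern_psd_gram phi1 xs) (kern_psd_gram phi2 xs)
  Ha Hb HK Hk Hk2).
Qed.

End RidgeRegression.

Section Averages.
Variable R : realType.

Definition avg (T : finType) (h : T -> R) : R := #|T|%:R^-1 * \sum_t h t.

Lemma norm_avg_le (T : finType) (h : T -> R) (c : R) :
  0 <= c -> (forall t, `|h t| <= c) -> `|avg h| <= c.
Proof.
move=> c0 hc; rewrite /avg; have [T0|T0] := posnP #|T|.
  by rewrite T0 invr0 mul0r normr0.
rewrite normrM ger0_norm ?invr_ge0 ?ler0n // ler_pdivrMl ?ltr0n //.
apply: (le_trans (ler_norm_sum _ _ _)).
by rewrite -sum1_card natr_sum mulr_suml; apply: ler_sum => t _; rewrite mul1r.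
Qed.

Lemma avgB (T : finType) (f g : T -> R) : avg f - avg g = avg (fun t => f t - g t).
Proof. by rewrite /avg -mulrBr sumrB. Qed.

Lemma avg_cst (T : finType) (a : R) : (0 < #|T|)%N -> avg (fun _ : T => a) = a.
Proof.
by move=> T0; rewrite /avg sumr_const -[a *+ _]mulr_natl mulKf // pnatr_eq0 -lt0n.
Qed.

End Averages.

Section TrigonometricKernels.
Variable R : realType.

Lemma freq_dotB (d L : nat) (om : Omega d L) (a b : 'rV[R]_d) :
  freq_dot om a - freq_dot om b = freq_dot om (a - b).
Proof. by rewrite /freq_dot -sumrB; apply: eq_bigr => k _; rewrite !mxE; ring. Qed.

Lemma kern_trig (T : finType) (c : R) (d L : nat) (f : T -> Omega d L) (a b : 'rV[R]_d) :
  \sum_(j : T * bool) (c * trig j.2 (freq_dot (f j.1) a)) * (c * trig j.2 (freq_dot (f j.1) b))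
  = c ^+ 2 * \sum_t cos (freq_dot (f t) (a - b)).
Proof.
rewrite -(pair_big xpredT xpredT (fun t (bb : bool) =>
   (c * trig bb (freq_dot (f t) a)) * (c * trig bb (freq_dot (f t) b)))) /=.
by rewrite mulr_sumr; apply: eq_bigr => t _; rewrite big_bool /= -freq_dotB cosB; ring.
Qed.

Lemma kern_phi_full (d L : nat) (a b : 'rV[R]_d) :
  kern (@phi_full R d L) a b = avg (fun om : Omega d L => cos (freq_dot om (a - b))).
Proof.
by rewrite /kern /phi_full (kern_trig _ (fun om : Omega d L => om)) exprVn sqr_sqrtr.
Qed.

Lemma kern_phi_rff (d L D : nat) (s : {ffun 'I_D -> Omega d L}) (a b : 'rV[R]_d) :
  kern (phi_rff s) a b = avg (fun j => cos (freq_dot (s j) (a - b))).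
Proof. by rewrite /kern /phi_rff (kern_trig _ s) exprVn sqr_sqrtr // /avg card_ord. Qed.

Lemma cos_lipschitz (u v : R) : `|cos u - cos v| <= `|u - v|.
Proof.
wlog uv : u v / u <= v.
  by move=> H; case: (leP u v) => [/H //|/ltW /H]; rewrite distrC [`|v - u|]distrC.
rewrite distrC [X in _ <= X]distrC.
have [c _ ->] := @MVT_segment R cos (fun x => - sin x) u v uv
  (fun x _ => is_derive_cos x) (continuous_subspaceT (@continuous_cos R)).
by rewrite normrM ler_piMl ?normr_ge0 // normrN sin_max.
Qed.

Lemma norm_freq_coord_le (d L : nat) (om : Omega d L) (k : 'I_d) :
  `|@freq_coord R d L om k| <= L%:R.
Proof.
rewrite /freq_coord; have := ltn_ord (om k).
move: (om k : nat) => m; rewrite addn1 ltnS -(ler_nat R) natrM.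
have : 0 <= m%:R :> R by rewrite ler0n.
by rewrite ler_norml; lra.
Qed.

Lemma cos_freq_dot_lipschitz (d L : nat) (om : Omega d L) (z z' : 'rV[R]_d) (r : R) :
  (forall k, `|z 0 k - z' 0 k| <= r) ->
  `|cos (freq_dot om z) - cos (freq_dot om z')| <= d%:R * L%:R * r.
Proof.
move=> Hz; apply: (le_trans (cos_lipschitz _ _)).
rewrite freq_dotB /freq_dot; apply: (le_trans (ler_norm_sum _ _ _)).
have -> : d%:R * L%:R * r = \sum_(k < d) L%:R * r by rewrite sumr_const card_ord; ring.
apply: ler_sum => k _.
by rewrite normrM !mxE ler_pM // norm_freq_coord_le.
Qed.

Definition rff_kernel_error (d L D : nat) (s : {ffun 'I_D -> Omega d L}) (z : 'rV[R]_d) : R :=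
  avg (fun om : Omega d L => cos (freq_dot om z)) - avg (fun j => cos (freq_dot (s j) z)).

Lemma rff_kernel_error0 (d L D : nat) (s : {ffun 'I_D -> Omega d L}) :
  (0 < D)%N -> rff_kernel_error s 0 = 0.
Proof.
move=> D0; have fd0 (om : Omega d L) : freq_dot om (0 : 'rV[R]_d) = 0.
  by rewrite /freq_dot big1 // => k _; rewrite mxE mulr0.
have avg1 (T : finType) (f : T -> Omega d L) :
  (0 < #|T|)%N -> avg (fun t => cos (freq_dot (f t) 0)) = 1 :> R.
  move=> T0; rewrite -[RHS](avg_cst 1 T0); congr avg.
  by apply/funext => t; rewrite fd0 cos0.
rewrite /rff_kernel_error (avg1 _ id) ?avg1 ?subrr ?card_ord //.
by rewrite card_ffun card_ord expn_gt0 addn1.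
Qed.

Lemma rff_kernel_error_lipschitz (d L D : nat) (s : {ffun 'I_D -> Omega d L})
  (z z' : 'rV[R]_d) (r : R) :
  0 <= r -> (forall k, `|z 0 k - z' 0 k| <= r) ->
  `|rff_kernel_error s z - rff_kernel_error s z'| <= (d%:R * L%:R * r) *+ 2.
Proof.
move=> r0 hz; have c0 : 0 <= d%:R * L%:R * r by rewrite !mulr_ge0 ?ler0n.
rewrite /rff_kernel_error.
set Az := avg _; set Bz := avg _; set Az' := avg _; set Bz' := avg _.
rewrite (_ : Az - Bz - (Az' - Bz') = (Az - Az') - (Bz - Bz')); last by ring.
rewrite !avgB; apply: (le_trans (ler_normB _ _)); rewrite mulr2n.
by apply: lerD; apply: norm_avg_le => // t; exact: cos_freq_dot_lipschitz.
Qed.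

End TrigonometricKernels.

Section Geometry.
Variable R : realType.

Lemma coord_le_eucl_dist (d : nat) (a b : 'rV[R]_d) (k : 'I_d) :
  `|a 0 k - b 0 k| <= eucl_dist a b.
Proof.
rewrite /eucl_dist -sqrtr_sqr ler_sqrt; last by apply: sumr_ge0 => i _; exact: sqr_ge0.
by rewrite (bigD1 k) //= lerDl; apply: sumr_ge0 => i _; exact: sqr_ge0.
Qed.

Lemma norm_mx_coord_le (d : nat) (a : 'rV[R]_d) (k : 'I_d) : `|a 0 k| <= `|a|.
Proof.
rewrite [X in _ <= X]mx_normrE.
exact: (le_bigmax 0 (fun ij : 'I_1 * 'I_d => `|a ij.1 ij.2|) (0, k)).
Qed.

Lemma eucl_dist_le_diam (d : nat) (X : set 'rV[R]_d) (a b : 'rV[R]_d) :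
  compact X -> X a -> X b -> eucl_dist a b <= diam X.
Proof.
move=> cX Xa Xb; have [M [_ HM]] := compact_bounded cX.
have XB x : X x -> `|x| <= `|M| + 1.
  by apply: HM; have := real_ler_norm (num_real M); lra.
apply: ub_le_sup; last by exists a => //; exists b.
exists (Num.sqrt (\sum_(k < d) (2 * (`|M| + 1)) ^+ 2)) => _ [x Xx [y Xy <-]].
rewrite /eucl_dist ler_sqrt; last by apply: sumr_ge0 => i _; exact: sqr_ge0.
apply: ler_sum => k _.
rewrite -real_normK ?num_real // -[X in _ <= X]real_normK ?num_real //.
apply: lerXn2r; rewrite ?nnegrE ?normr_ge0 //.
apply: (le_trans (ler_normB _ _)).
have := le_trans (norm_mx_coord_le x k) (XB _ Xx).
have := le_trans (norm_mx_coord_le y k) (XB _ Xy).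
have : 0 <= `|M| + 1 by rewrite addr_ge0.
by rewrite ger0_norm ?mulr_ge0 //; lra.
Qed.

Definition grid_point (d N : nat) (r : R) (m : {ffun 'I_d -> 'I_(2 * N + 1)}) : 'rV[R]_d :=
  \row_k (r * ((m k : nat)%:R - N%:R)).

Lemma grid_coord_near (N : nat) (r z : R) : 0 < r -> `|z| <= N%:R * r ->
  exists i : 'I_(2 * N + 1), `|z - r * ((i : nat)%:R - N%:R)| <= r.
Proof.
move=> r0 hz; set x := z / r + N%:R.
have hz' : `|z / r| <= N%:R.
  by rewrite normrM [`|r^-1|]gtr0_norm ?invr_gt0 // ler_pdivrMr.
have x0 : 0 <= x by move: hz'; rewrite ler_norml /x; lra.
have x2 : x <= (2 * N)%:R by move: hz'; rewrite ler_norml /x natrM; lra.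
have /andP [x_ge x_lt] := truncn_itv x0.
have iN : (Num.truncn x < 2 * N + 1)%N.
  by rewrite addn1 ltnS; have := le_truncn x2; rewrite natrK.
exists (Ordinal iN) => /=.
have -> : z - r * ((Num.truncn x)%:R - N%:R) = r * (x - (Num.truncn x)%:R).
  by rewrite /x; field; rewrite gt_eqF.
rewrite normrM gtr0_norm // ger_pMr // ger0_norm ?subr_ge0 //.
by move: x_lt; rewrite -natr1; lra.
Qed.

Lemma grid_point_near (d N : nat) (r : R) (z : 'rV[R]_d) : 0 < r ->
  (forall k, `|z 0 k| <= N%:R * r) ->
  exists m : {ffun 'I_d -> 'I_(2 * N + 1)}, forall k, `|z 0 k - grid_point r m 0 k| <= r.
Proof.
move=> r0 hz.
have /fin_all_exists [f hf] : forall k, exists i : 'I_(2 * N + 1),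
    `|z 0 k - r * ((i : nat)%:R - N%:R)| <= r by move=> k; exact: grid_coord_near.
by exists (finfun f) => k; rewrite /grid_point mxE ffunE.
Qed.

End Geometry.

Lemma card_exists_le_sum (G S : finType) (P : G -> S -> bool) :
  (#|[set s | [exists g, P g s]]| <= \sum_g #|[set s | P g s]|)%N.
Proof.
have cardE g : #|[set s | P g s]| = (\sum_s P g s)%N.
  by rewrite -sum1_card big_mkcond /=; apply: eq_bigr => s _; rewrite inE; case: (P g s).
under [X in (_ <= X)%N]eq_bigr do rewrite cardE.
rewrite exchange_big /= -sum1_card big_mkcond /=; apply: leq_sum => s _.
by rewrite inE; case: existsP => [[g Pgs]|_] //; rewrite (bigD1 g) //= Pgs.
Qed.

Section Hoeffding.
Variable R : realType.

Lemma expR_le_quadratic (x : R) : x <= 1 / 2 -> expR x <= 1 + x + 2 * x ^+ 2.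
Proof.
move=> hx; have ex := expR_gt0 x; have h1x : 0 < 1 - x by lra.
have emx : (1 - x) * expR x <= 1.
  by have := ler_wpM2r (ltW ex) (expR_ge1Dx (- x)); rewrite expRN mulVf ?gt_eqF.
rewrite -(ler_pM2l h1x); apply: le_trans emx _.
rewrite -subr_ge0 (_ : _ - 1 = x ^+ 2 * (1 - 2 * x)); last by ring.
by rewrite mulr_ge0 ?sqr_ge0 //; lra.
Qed.

Lemma card_mul_le_sum (S : finType) (F : S -> R) (P : pred S) (a : R) :
  (forall s, 0 <= F s) -> (forall s, P s -> a <= F s) ->
  #|[set s | P s]|%:R * a <= \sum_s F s.
Proof.
move=> F0 HP; rewrite -sum1_card natr_sum mulr_suml.
apply: (@le_trans _ _ (\sum_(s in [set s | P s]) F s)).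
  by apply: ler_sum => s; rewrite inE mul1r; exact: HP.
by rewrite [X in _ <= X](bigID (mem [set s | P s])) /= lerDl sumr_ge0.
Qed.

Lemma sum_expR_centered_le (T : finType) (Z : T -> R) (th : R) :
  \sum_t Z t = 0 -> (forall t, `|Z t| <= 2) -> 0 <= th <= 1 / 4 ->
  \sum_t expR (th * Z t) <= #|T|%:R * expR (8 * th ^+ 2).
Proof.
move=> Z0 Zb /andP [th0 th4].
apply: (@le_trans _ _ (\sum_t (1 + th * Z t + 2 * (th * Z t) ^+ 2))).
  apply: ler_sum => t _; apply: expR_le_quadratic.
  have := Zb t; rewrite ler_norml => /andP [_ h].
  have : th * Z t <= th * 2 by rewrite ler_wpM2l.
  lra.
rewrite !big_split /= -!mulr_sumr Z0 mulr0 addr0 sumr_const.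
have Z2 : \sum_t (th * Z t) ^+ 2 <= \sum_(t : T) th ^+ 2 * 4.
  apply: ler_sum => t _; rewrite exprMn ler_wpM2l ?sqr_ge0 //.
  rewrite -real_normK ?num_real // (_ : 4 = 2 ^+ 2); last by rewrite expr2 -natrM.
  by rewrite lerXn2r ?nnegrE.
rewrite sumr_const in Z2.
apply: (@le_trans _ _ (#|T|%:R * (1 + 8 * th ^+ 2))).
  by rewrite -mulr_natr -mulr_natl in Z2 *; lra.
by rewrite ler_wpM2l ?ler0n // expR_ge1Dx.
Qed.

Lemma card_sum_draws_gt (T : finType) (D : nat) (Z : T -> R) (tau : R) :
  \sum_t Z t = 0 -> (forall t, `|Z t| <= 2) -> 0 < tau <= 4 ->
  #|[set s : {ffun 'I_D -> T} | D%:R * tau < \sum_j Z (s j)]|%:R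
    <= #|T|%:R ^+ D * expR (- (D%:R * tau ^+ 2 / 32)).
Proof.
(* [th = tau / 16] minimises [8 th^2 - th tau]. *)
move=> Z0 Zb /andP [tau0 tau4]; set th := tau / 16.
have th0 : 0 < th by rewrite divr_gt0.
have mgf : \sum_t expR (th * Z t) <= #|T|%:R * expR (8 * th ^+ 2).
  by apply: sum_expR_centered_le; rewrite // ltW //= /th; lra.
pose F (s : {ffun 'I_D -> T}) := \prod_j expR (th * Z (s j)).
have FE (s : {ffun 'I_D -> T}) : F s = expR (th * \sum_j Z (s j)).
  by rewrite /F mulr_sumr expR_sum.
have Fpos (s : {ffun 'I_D -> T}) : 0 <= F s by rewrite FE ltW ?expR_gt0.
have Fbig (s : {ffun 'I_D -> T}) :
    D%:R * tau < \sum_j Z (s j) -> expR (th * (D%:R * tau)) <= F s.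
  by move=> hs; rewrite FE ler_expR ler_pM2l // ltW.
have chernoff := card_mul_le_sum Fpos Fbig.
have sumF : \sum_s F s = (\sum_t expR (th * Z t)) ^+ D.
  by rewrite -(bigA_distr_bigA (fun (j : 'I_D) t => expR (th * Z t))) prodr_const card_ord.
have mgfD : \sum_s F s <= #|T|%:R ^+ D * expR (D%:R * (8 * th ^+ 2)).
  rewrite sumF expRM_natl -exprMn; apply: lerXn2r => //; rewrite nnegrE.
    by apply: sumr_ge0 => t _; rewrite ltW ?expR_gt0.
  by rewrite mulr_ge0 ?ler0n ?ltW ?expR_gt0.
rewrite -(ler_pM2r (expR_gt0 (th * (D%:R * tau)))).
apply: le_trans (le_trans chernoff mgfD) _.
rewrite -[_ * _ * expR _]mulrA -expRD (_ : - _ + _ = D%:R * (8 * th ^+ 2)) //.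
by rewrite /th; field.
Qed.

Lemma card_avg_draws_far (T : finType) (D : nat) (h : T -> R) (tau : R) :
  (0 < #|T|)%N -> (0 < D)%N -> (forall t, `|h t| <= 1) -> 0 < tau ->
  #|[set s : {ffun 'I_D -> T} | tau < `|avg h - avg (fun j => h (s j))|]|%:R
    <= 2 * (#|T|%:R ^+ D * expR (- (D%:R * tau ^+ 2 / 32))).
Proof.
move=> T0 D0 hb tau0; set mu := avg h.
have mub : `|mu| <= 1 by exact: norm_avg_le.
have avg_draws_le1 (s : {ffun 'I_D -> T}) : `|avg (fun j => h (s j))| <= 1.
  by apply: norm_avg_le.
have [tau4|tau4] := leP tau 4; last first.
  rewrite (_ : [set s | _] = finset.set0).
    by rewrite cards0 !mulr_ge0 ?exprn_ge0 ?ler0n // ltW // expR_gt0.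
  apply/setP => s; rewrite !inE; apply/negbTE; rewrite -leNgt.
  by apply: (le_trans (ler_normB _ _)); have := avg_draws_le1 s; lra.
pose Z t := h t - mu.
have Z0 : \sum_t Z t = 0.
  rewrite sumrB sumr_const -mulr_natl /mu /avg mulrA mulfV ?mul1r ?subrr //.
  by rewrite pnatr_eq0 -lt0n.
have Zb t : `|Z t| <= 2 by apply: (le_trans (ler_normB _ _)); have := hb t; lra.
have sumZ (s : {ffun 'I_D -> T}) :
    \sum_j Z (s j) = D%:R * (avg (fun j => h (s j)) - mu).
  rewrite sumrB sumr_const card_ord /avg card_ord mulrBr mulrA mulfV ?mul1r ?mulr_natl //.
  by rewrite pnatr_eq0 -lt0n.
have far_sub : [set s : {ffun 'I_D -> T} | tau < `|mu - avg (fun j => h (s j))|] \subset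
    [set s : {ffun 'I_D -> T} | D%:R * tau < \sum_j Z (s j)] :|:
    [set s : {ffun 'I_D -> T} | D%:R * tau < \sum_j - Z (s j)].
  apply/fintype.subsetP => s; rewrite !inE sumrN !sumZ -[- (D%:R * _)]mulrN.
  rewrite !ltr_pM2l ?ltr0n // ltr_normr.
  by move=> /orP [] ?; apply/orP; [right|left]; lra.
have := leq_trans (subset_leq_card far_sub) (leq_card_setU _ _).
rewrite -(ler_nat R) natrD => /le_trans; apply.
have tau04 : 0 < tau <= 4 by rewrite tau0 tau4.
rewrite mulr2n mulrDl mul1r; apply: lerD; first exact: card_sum_draws_gt Z0 Zb tau04.
apply: (@card_sum_draws_gt T D (fun t => - Z t) tau _ _ tau04).
  by rewrite sumrN Z0 oppr0.
by move=> t; rewrite normrN.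
Qed.

End Hoeffding.

Lemma prob_sample_ge (R : realType) (d L D : nat) (E : {ffun 'I_D -> Omega d L} -> Prop)
  (B : {set {ffun 'I_D -> Omega d L}}) (delta : R) :
  (forall s, s \notin B -> E s) -> #|B|%:R <= delta * #|{: Omega d L}|%:R ^+ D ->
  1 - delta <= @prob_sample R d L D E.
Proof.
move=> HE HB; rewrite /prob_sample card_ffun card_ord natrX.
have Spos : 0 < #|{: Omega d L}|%:R ^+ D :> R.
  by rewrite exprn_gt0 // ltr0n card_ffun card_ord expn_gt0 addn1.
have sub : ~: B \subset [set s | `[< E s >]]%classic.
  by apply/fintype.subsetP => s; rewrite inE => /HE Es; rewrite in_setE; apply/asboolP.
rewrite ler_pdivlMr //; apply: (@le_trans _ _ #|~: B|%:R).
  have := cardsC B; rewrite card_ffun card_ord => /(congr1 (fun n => n%:R : R)).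
  by rewrite natrD natrX; lra.
by rewrite ler_nat subset_leq_card.
Qed.

Section CloseEvent.
Variable R : realType.

Lemma close_event_of_kernel_error_le (d L M D : nat) (X : set 'rV[R]_d)
  (xs : 'I_M -> 'rV[R]_d) (ys : 'I_M -> R) (lam eps eta : R) (s : {ffun 'I_D -> Omega d L}) :
  (0 < M)%N -> 0 < lam -> 0 <= eta -> (forall i, X (xs i)) ->
  (forall a b, X a -> X b -> `|rff_kernel_error s (a - b)| <= eta) ->
  eta * sigma_y ys * (1 + lam) / lam ^+ 2 <= eps ->
  close_event X xs ys lam eps s.
Proof.
move=> M0 lam0 eta0 Xxs err_le eta_le w wt Hw Hwt x Xx; apply: le_trans eta_le.
apply: (ridge_pred_diff_le M0 lam0 eta0 Hw Hwt).
- by move=> i l; rewrite kern_phi_full kern_phi_rff; exact: err_le.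
- by move=> i; rewrite kern_phi_full kern_phi_rff; exact: err_le.
- by move=> i; rewrite kern_phi_rff; apply: norm_avg_le => // j; exact: cos_max.
Qed.

Lemma norm_rff_kernel_error_le (d L D : nat) (s : {ffun 'I_D -> Omega d L})
  (z : 'rV[R]_d) (r : R) :
  (0 < D)%N -> 0 <= r -> (forall k, `|z 0 k| <= r) ->
  `|rff_kernel_error s z| <= (d%:R * L%:R * r) *+ 2.
Proof.
move=> D0 r0 hz; rewrite -[rff_kernel_error s z]subr0 -(rff_kernel_error0 R s D0).
by apply: rff_kernel_error_lipschitz => // k; rewrite mxE subr0.
Qed.

Lemma diff_coord_le_diam (d : nat) (X : set 'rV[R]_d) (a b : 'rV[R]_d) (k : 'I_d) :
  compact X -> X a -> X b -> `|(a - b) 0 k| <= diam X.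
Proof.
move=> cX Xa Xb; rewrite !mxE.
exact: le_trans (coord_le_eucl_dist a b k) (eucl_dist_le_diam cX Xa Xb).
Qed.

Lemma close_event_of_small_diam (d L M D : nat) (X : set 'rV[R]_d)
  (xs : 'I_M -> 'rV[R]_d) (ys : 'I_M -> R) (lam eps : R) (s : {ffun 'I_D -> Omega d L}) :
  (0 < M)%N -> (0 < D)%N -> 0 < lam -> compact X -> 0 <= diam X -> (forall i, X (xs i)) ->
  (d%:R * L%:R * diam X) *+ 2 * sigma_y ys * (1 + lam) / lam ^+ 2 <= eps ->
  close_event X xs ys lam eps s.
Proof.
move=> M0 D0 lam0 cX dX0 Xxs; apply: close_event_of_kernel_error_le => //.
  by rewrite mulrn_wge0 // !mulr_ge0 ?ler0n.
move=> a b Xa Xb; apply: norm_rff_kernel_error_le => // k.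
exact: diff_coord_le_diam.
Qed.

Lemma close_event_of_grid (d L M D N : nat) (X : set 'rV[R]_d)
  (xs : 'I_M -> 'rV[R]_d) (ys : 'I_M -> R) (lam eps r : R) (s : {ffun 'I_D -> Omega d L}) :
  (0 < M)%N -> 0 < lam -> 0 < r -> compact X -> diam X <= N%:R * r -> (forall i, X (xs i)) ->
  (forall m : {ffun 'I_d -> 'I_(2 * N + 1)},
    `|rff_kernel_error s (grid_point r m)| <= (d%:R * L%:R * r) *+ 2) ->
  (d%:R * L%:R * r) *+ 4 * sigma_y ys * (1 + lam) / lam ^+ 2 <= eps ->
  close_event X xs ys lam eps s.
Proof.
move=> M0 lam0 r0 cX dXN Xxs grid_le.
have c0 : 0 <= d%:R * L%:R * r by rewrite !mulr_ge0 ?ler0n ?ltW.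
apply: close_event_of_kernel_error_le => //; first by rewrite mulrn_wge0.
move=> a b Xa Xb.
have [m near_m] : exists m : {ffun 'I_d -> 'I_(2 * N + 1)},
    forall k, `|(a - b) 0 k - grid_point r m 0 k| <= r.
  by apply: grid_point_near => // k; exact: le_trans (diff_coord_le_diam k cX Xa Xb) dXN.
have := rff_kernel_error_lipschitz s (ltW r0) near_m; have := grid_le m.
rewrite (_ : 4 = 2 + 2)%N // mulrnDr.
set e := rff_kernel_error s (a - b); set eg := rff_kernel_error s (grid_point r m).
move=> eg_le e_eg_le; rewrite -(subrK eg e); apply: (le_trans (ler_normD _ _)).
by rewrite addrC; apply: lerD.
Qed.

Lemma card_grid_far_le (d L D N : nat) (r tau : R) :
  (0 < D)%N -> 0 < tau ->
  #|[set s : {ffun 'I_D -> Omega d L} | [exists m : {ffun 'I_d -> 'I_(2 * N + 1)},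
      tau < `|rff_kernel_error s (grid_point r m)|]]|%:R
  <= (2 * N + 1)%:R ^+ d * (2 * (#|{: Omega d L}|%:R ^+ D * expR (- (D%:R * tau ^+ 2 / 32)))).
Proof.
move=> D0 tau0; have Omega0 : (0 < #|{: Omega d L}|)%N.
  by rewrite card_ffun card_ord expn_gt0 addn1.
have := card_exists_le_sum (fun (m : {ffun 'I_d -> 'I_(2 * N + 1)})
  (s : {ffun 'I_D -> Omega d L}) => tau < `|rff_kernel_error s (grid_point r m)|).
rewrite -(ler_nat R) natr_sum => /le_trans; apply.
pose far := 2 * (#|{: Omega d L}|%:R ^+ D * expR (- (D%:R * tau ^+ 2 / 32))) : R.
apply: (@le_trans _ _ (\sum_(m : {ffun 'I_d -> 'I_(2 * N + 1)}) far)).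
  apply: ler_sum => m _; apply: (card_avg_draws_far
    (h := fun om : Omega d L => cos (freq_dot om (grid_point r m))) Omega0 D0) => // om.
  exact: cos_max.
by rewrite sumr_const card_ffun !card_ord -[far *+ _]mulr_natl natrX.
Qed.

Lemma prob_close_event_ge_of_grid (d L M D N : nat) (X : set 'rV[R]_d)
  (xs : 'I_M -> 'rV[R]_d) (ys : 'I_M -> R) (lam eps delta r : R) :
  (0 < d)%N -> (0 < L)%N -> (0 < M)%N -> (0 < D)%N -> 0 < lam -> 0 < r ->
  compact X -> diam X <= N%:R * r -> (forall i, X (xs i)) ->
  (d%:R * L%:R * r) *+ 4 * sigma_y ys * (1 + lam) / lam ^+ 2 <= eps ->
  (2 * N + 1)%:R ^+ d * 2 * expR (- (D%:R * ((d%:R * L%:R * r) *+ 2) ^+ 2 / 32)) <= delta ->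
  1 - delta <= @prob_sample R d L D (close_event X xs ys lam eps).
Proof.
move=> d0 L0 M0 D0 lam0 r0 cX dXN Xxs eps_ge delta_ge.
have tau0 : 0 < (d%:R * L%:R * r) *+ 2 by rewrite pmulrn_lgt0 // !mulr_gt0 ?ltr0n.
apply: (prob_sample_ge (B := [set s | [exists m : {ffun 'I_d -> 'I_(2 * N + 1)},
    (d%:R * L%:R * r) *+ 2 < `|rff_kernel_error s (grid_point r m)|]])).
  move=> s; rewrite inE negb_exists => /forallP grid_le.
  apply: close_event_of_grid dXN Xxs _ eps_ge => // m.
  by rewrite leNgt; exact: grid_le.
apply: le_trans (card_grid_far_le d L N r D0 tau0) _.
set E := expR _; set W := _ ^+ D.
rewrite (_ : _ * (2 * (W * E)) = (2 * N + 1)%:R ^+ d * 2 * E * W); last by ring.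
by apply: ler_wpM2r; rewrite // exprn_ge0.
Qed.

End CloseEvent.

Section SampleSize.
Variable R : realType.

Lemma grid_size_le (N : nat) (dX r : R) :
  0 < r -> r *+ 2 < dX -> N = (Num.truncn (dX / r)).+1 -> (2 * N + 1)%:R <= 7 / 2 * (dX / r).
Proof.
move=> r0 dX_gt ->; have u2 : 2 < dX / r by rewrite ltr_pdivlMr // mulr_natl.
have /andP [trunc_le _] := truncn_itv (ltW (lt_trans (ltr0n _ 2) u2)).
by rewrite natrD natrM -[(Num.truncn _).+1%:R]natr1; lra.
Qed.

Lemma exponent_ge_of_sample_size (d L D : nat) (dX sy lam eps delta c : R) :
  (0 < d)%N -> 0 < lam -> 0 < sy -> 0 < c ->
  c *+ 4 * sy * (1 + lam) / lam ^+ 2 = eps ->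
  128 * (d%:R * (sy ^+ 2 + 1) * (1 + lam) ^+ 2 / (lam ^+ 4 * eps ^+ 2)
     * (ln (d%:R * L%:R ^+ 2 * dX) + ln (28 * (`|sy| + 1) * (1 + lam) / (eps * lam ^+ 2))
        - ln delta)) <= D%:R ->
  0 <= ln (d%:R * L%:R ^+ 2 * dX) + ln (28 * (`|sy| + 1) * (1 + lam) / (eps * lam ^+ 2))
       - ln delta ->
  d%:R * (ln (d%:R * L%:R ^+ 2 * dX) + ln (28 * (`|sy| + 1) * (1 + lam) / (eps * lam ^+ 2))
     - ln delta) <= D%:R * (c *+ 2) ^+ 2 / 32.
Proof.
move=> d0 lam0 sy0 c0 <-; set lnB := _ - ln delta => + lnB0.
have l1 : 0 < 1 + lam by rewrite ltr_pwDr.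
have c2 : 0 < (c *+ 2) ^+ 2 by rewrite exprn_gt0 // pmulrn_lgt0.
rewrite (_ : 128 * _ = d%:R * lnB * (1 + sy^-2) * 32 / (c *+ 2) ^+ 2); last first.
  clearbody lnB; rewrite -[c *+ 4]mulr_natr -[c *+ 2]mulr_natr.
  by field; rewrite !gt_eqF.
rewrite ler_pdivrMr // => HD; rewrite ler_pdivlMr //; apply: le_trans HD.
rewrite ler_wpM2r // ler_peMr ?mulr_ge0 ?ler0n //.
by rewrite lerDl invr_ge0 sqr_ge0.
Qed.

Lemma ln_grid_size_le (d L : nat) (dX sy lam eps r : R) :
  (0 < d)%N -> (0 < L)%N -> 0 < lam -> 0 < sy -> 0 < r -> 0 < dX ->
  (d%:R * L%:R * r) *+ 4 * sy * (1 + lam) / lam ^+ 2 = eps ->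
  ln 2 + ln (7 / 2 * (dX / r))
    <= ln (d%:R * L%:R ^+ 2 * dX) + ln (28 * (`|sy| + 1) * (1 + lam) / (eps * lam ^+ 2)).
Proof.
move=> d0 L0 lam0 sy0 r0 dX0 <-; have l1 : 0 < 1 + lam by rewrite ltr_pwDr.
set Q := 7 / 2 * (dX / r); set A := d%:R * L%:R ^+ 2 * dX; set Bc : R := 28 * _ * _ / _.
have Q0 : 0 < Q by rewrite !mulr_gt0 ?invr_gt0.
have A0 : 0 < A by rewrite !mulr_gt0 ?exprn_gt0 ?ltr0n.
have ABE : A * Bc = 2 * Q * (L%:R * ((`|sy| + 1) / sy)).
  by rewrite /A /Bc /Q -[_ *+ 4]mulr_natr; field; rewrite !gt_eqF ?ltr0n.
have sy_le : 1 <= L%:R * ((`|sy| + 1) / sy).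
  apply: mulr_ege1; first by rewrite ler1n.
  by rewrite ler_pdivlMr // mul1r; have := ler_norm sy; lra.
have Q2 : 0 < 2 * Q by apply: mulr_gt0.
have AB0 : 0 < A * Bc by rewrite ABE mulr_gt0 // (lt_le_trans ltr01).
have Bc0 : 0 < Bc by move: AB0; rewrite pmulr_rgt0.
have : 2 * Q <= A * Bc by rewrite ABE ler_peMr // ltW.
by rewrite -ler_ln ?posrE // lnM ?posrE // lnM ?posrE.
Qed.

Lemma grid_failure_le (d L D N : nat) (dX sy lam eps delta r : R) :
  (0 < d)%N -> (0 < L)%N -> 0 < lam -> 0 < delta < 1 -> 0 < sy -> 0 < r ->
  (d%:R * L%:R * r) *+ 4 * sy * (1 + lam) / lam ^+ 2 = eps ->
  r *+ 2 < dX -> N = (Num.truncn (dX / r)).+1 ->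
  128 * (d%:R * (sy ^+ 2 + 1) * (1 + lam) ^+ 2 / (lam ^+ 4 * eps ^+ 2)
     * (ln (d%:R * L%:R ^+ 2 * dX) + ln (28 * (`|sy| + 1) * (1 + lam) / (eps * lam ^+ 2))
        - ln delta)) <= D%:R ->
  (2 * N + 1)%:R ^+ d * 2 * expR (- (D%:R * ((d%:R * L%:R * r) *+ 2) ^+ 2 / 32)) <= delta.
Proof.
move=> d0 L0 lam0 /andP [de0 de1] sy0 r0 eps_eq dX_gt HN HD.
have c0 : 0 < d%:R * L%:R * r by rewrite !mulr_gt0 ?ltr0n.
have dX0 : 0 < dX by apply: lt_trans dX_gt; rewrite pmulrn_lgt0.
set Q := 7 / 2 * (dX / r); have NQ : (2 * N + 1)%:R <= Q by exact: grid_size_le.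
have Q1 : 1 < Q by apply: lt_le_trans NQ; rewrite ltr1n HN addn1 ltnS muln_gt0.
have lnQ0 : 0 < ln Q by exact: ln_gt0.
have ln20 : 0 < ln (2 : R) by apply: ln_gt0; lra.
have lnde : ln delta < 0 by rewrite -ln1 ltr_ln ?posrE.
have lnB_ge := ln_grid_size_le d0 L0 lam0 sy0 r0 dX0 eps_eq.
have D_ge := exponent_ge_of_sample_size d0 lam0 sy0 c0 eps_eq HD ltac:(lra).
have NQd : (2 * N + 1)%:R ^+ d <= expR (ln Q *+ d).
  rewrite -lnXn ?lnK ?posrE ?exprn_gt0 ?(lt_trans ltr01 Q1) //.
  by rewrite lerXn2r ?nnegrE ?ler0n // ltW // (lt_trans ltr01 Q1).
rewrite -[2 in X in X <= _](@lnK _ 2) ?posrE ?ltr0n //.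
apply: le_trans (_ : expR (ln Q *+ d) * expR (ln 2) * expR (- _) <= _).
  by do 2 (apply: ler_wpM2r; first exact: ltW (expR_gt0 _)).
rewrite -!expRD -[X in _ <= X](@lnK _ delta) ?posrE // ler_expR.
have : 0 <= (d%:R - 1) * (ln 2 - ln delta).
  by apply: mulr_ge0; rewrite subr_ge0 ?ler1n //; lra.
rewrite -mulr_natr; nra.
Qed.

Lemma grid_spacing_exists (d L : nat) (dX sy lam eps : R) :
  (0 < d)%N -> (0 < L)%N -> 0 < lam -> 0 < eps -> 0 <= sy -> 0 <= dX ->
  eps < (d%:R * L%:R * dX) *+ 2 * sy * (1 + lam) / lam ^+ 2 ->
  exists r : R, [/\ 0 < sy, 0 < r,
    (d%:R * L%:R * r) *+ 4 * sy * (1 + lam) / lam ^+ 2 = eps & r *+ 2 < dX].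
Proof.
move=> d0 L0 lam0 eps0 sy_ge0 dX0 large; have l1 : 0 < 1 + lam by rewrite ltr_pwDr.
have sy0 : 0 < sy.
  rewrite lt_def sy_ge0 andbT; apply: contraTneq large => ->.
  by rewrite mulr0 !mul0r -leNgt ltW.
have c0 : 0 < d%:R * L%:R * sy * (1 + lam) by rewrite !mulr_gt0 ?ltr0n.
exists (eps * lam ^+ 2 / ((d%:R * L%:R * sy * (1 + lam)) *+ 4)); set r := _ / _.
have eps_eq : (d%:R * L%:R * r) *+ 4 * sy * (1 + lam) / lam ^+ 2 = eps.
  by rewrite /r -[_ *+ 4]mulr_natr; field; rewrite !gt_eqF ?ltr0n.
split=> //; first by rewrite divr_gt0 ?pmulrn_lgt0 // mulr_gt0 ?exprn_gt0.
have K0 : 0 < d%:R * L%:R * (sy * (1 + lam) / lam ^+ 2).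
  by rewrite !mulr_gt0 ?invr_gt0 ?exprn_gt0 ?ltr0n.
have scale (x : R) n : (d%:R * L%:R * x) *+ n * sy * (1 + lam) / lam ^+ 2 =
    x *+ n * (d%:R * L%:R * (sy * (1 + lam) / lam ^+ 2)) by rewrite -mulrnAr; ring.
by move: large; rewrite -eps_eq !scale ltr_pM2r //; lra.
Qed.

End SampleSize.

Local Open Scope classical_set_scope.
Local Open Scope ring_scope.

Theorem theorem1 (R : realType) :
  exists K : R, 0 < K /\
  exists C1 C2 : R -> R -> R,
    (forall sy dX, 0 < C1 sy dX /\ 0 < C2 sy dX) /\
    forall (d L M D : nat) (X : set 'rV[R]_d)
      (xs : 'I_M -> 'rV[R]_d) (ys : 'I_M -> R) (lam eps delta : R),
      (0 < d)%N -> (0 < L)%N -> (0 < M)%N -> (0 < D)%N ->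
      compact X -> X !=set0 -> (forall i, X (xs i)) ->
      0 < lam -> 0 < eps -> 0 < delta < 1 ->
      let sy := sigma_y ys in
      let dX := diam X in
      K * (d%:R * C1 sy dX * (1 + lam) ^+ 2 / (lam ^+ 4 * eps ^+ 2)
           * (ln (d%:R * L%:R ^+ 2 * dX)
              + ln (C2 sy dX * (1 + lam) / (eps * lam ^+ 2))
              - ln delta)) <= D%:R ->
      1 - delta <= @prob_sample R d L D (@close_event R d L M D X xs ys lam eps).
Proof.
(* [128 = 4 * 32] comes from Hoeffding at deviation [eps lam^2 / (2 sigma_y (1 + lam))],
   and [C2] absorbs the number [7 |X| / (2 r)] of grid points per axis. *)
exists 128; split; first by rewrite ltr0n.
exists (fun sy _ => sy ^+ 2 + 1), (fun sy _ => 28 * (`|sy| + 1)); split.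
  by move=> sy _; rewrite ltr_pwDr ?sqr_ge0 // mulr_gt0 // ltr_pwDr.
move=> d L M D X xs ys lam eps delta d0 L0 M0 D0 cX [x0 Xx0] Xxs lam0 eps0 delta01 sy dX HD.
have dX0 : 0 <= dX := le_trans (sqrtr_ge0 _) (eucl_dist_le_diam cX Xx0 Xx0).
(* For large [eps] no sampling is needed; this case must be separate because the
   sample-size hypothesis is vacuous when [ln (d L^2 |X|)] is very negative. *)
have [small|large] := leP ((d%:R * L%:R * dX) *+ 2 * sy * (1 + lam) / lam ^+ 2) eps.
  apply: (prob_sample_ge (B := finset.set0)) => [s _|]; first exact: close_event_of_small_diam.
  by case/andP: delta01 => delta0 _; rewrite cards0 mulr_ge0 ?exprn_ge0 ?ler0n ?ltW.
have [r [sy0 r0 eps_eq dX_gt]] :=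
  grid_spacing_exists d0 L0 lam0 eps0 (sqrtr_ge0 _) dX0 large.
apply: (prob_close_event_ge_of_grid (N := (Num.truncn (dX / r)).+1) d0 L0 M0 D0 lam0 r0 cX _ Xxs).
- rewrite -ler_pdivrMr // ltW //.
  by have /andP [] := truncn_itv (divr_ge0 dX0 (ltW r0)).
- by rewrite eps_eq.
- exact: (grid_failure_le d0 L0 lam0 delta01 sy0 r0 eps_eq dX_gt erefl HD).
Qed.
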